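(* Let $\mathscr{A}$ be a monoidal category with unit object $I$, let $T=(T,\mu,\eta)$ be a monoidal monad on $\mathscr{A}$, and let $(G,\zeta,\delta,\varepsilon)$ be an opmonoidal mixed opwreath around $T$. Then the monoid $\mathrm{mkl}(G,\zeta,T)(I,I)=\mathscr{A}(GI,TI)$ of endomorphisms of $I$ in the category $\mathrm{mkl}(G,\zeta,T)$ is commutative.
   Context: A monoidal monad on $\mathscr{A}$ is a monad $T$ with a lax monoidal structure $\phi_{X,Y}\colon TX\otimes TY\to T(X\otimes Y)$, $\phi_0\colon I\to TI$ such that $\mu$ and $\eta$ are monoidal natural transformations. The Kleisli category $\mathscr{A}_T$ (objects of $\mathscr{A}$, morphisms $X\to Y$ are morphisms $X\to TY$ of $\mathscr{A}$, composite of $f\colon X\to TY$ and $g\colon Y\to TZ$ is $\mu_Z\circ Tg\circ f$) is then monoidal with tensor of objects as in $\mathscr{A}$, tensor of $f\colon X\to TY$, $f'\colon X'\to TY'$ equal to $\phi_{Y,Y'}\circ(f\otimes f')$, and unit $I$. A mixed opwreath around $T$ is an endofunctor $G$ of $\mathscr{A}$ with natural transformations $\zeta\colon GT\Rightarrow TG$, $\delta\colon G\Rightarrow TGG$, $\varepsilon\colon G\Rightarrow T$ satisfying: $\zeta\circ G\mu=\mu G\circ T\zeta\circ\zeta T$; $\zeta\circ G\eta=\eta G$; $\mu\circ\varepsilon T=\mu\circ T\varepsilon\circ\zeta$; $\mu GG\circ T\zeta G\circ TG\zeta\circ\delta T=\mu GG\circ T\delta\circ\zeta$; $\mu GGG\circ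 T\delta G\circ\delta=\mu GGG\circ T\zeta GG\circ TG\delta\circ\delta$; $\mu G\circ T\varepsilon G\circ\delta=\eta G$; $\mu G\circ T\zeta\circ TG\varepsilon\circ\delta=\eta G$ (juxtaposition denotes composition/whiskering of functors and transformations). It induces a lifted comonad $\bar G$ on $\mathscr{A}_T$: $\bar G X=GX$, $\bar G f=\zeta_Y\circ Gf\colon GX\to TGY$ for $f\colon X\to TY$, comultiplication $\bar\delta_X=\delta_X\colon GX\to TGGX$ and counit $\bar\varepsilon_X=\varepsilon_X\colon GX\to TX$ (as Kleisli morphisms). The mixed opwreath is opmonoidal when $\bar G$ is equipped with an opmonoidal comonad structure on the monoidal category $\mathscr{A}_T$, i.e. $\bar G$ is an opmonoidal functor (natural Kleisli morphisms $\psi_{X,X'}\colon G(X\otimes X')\to T(GX\otimes GX')$ and $\psi_0\colon GI\to TI$, coassociative and counital) and $\bar\delta$, $\bar\varepsilon$ are opmonoidal natural transformations. The category $\mathrm{mkl}(G,\zeta,T)$ has the objects of $\mathscr{A}$, hom-sets $\mathrm{mkl}(G,\zeta,T)(X,Y)=\mathscr{A}(GX,TY)$, identity on $X$ equal to $\varepsilon_X$, and composite of $f\colon GX\to TY$ and $g\colon GY\to TZ$ given by the wreath convolution $\mu^{(3)}_Z\circ TTg\circ T\zeta_Y\circ TGf\circ\delta_X$, where $\mu^{(3)}=\mu\circ T\mu\colon TTT\Rightarrow T$. *)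

Set Implicit Arguments.
Unset Strict Implicit.

Record Category := {
  Ob :> Type;
  Hom : Ob -> Ob -> Type;
  cid : forall X, Hom X X;
  comp : forall X Y Z, Hom Y Z -> Hom X Y -> Hom X Z;
  comp_id_l : forall X Y (f : Hom X Y), comp (cid Y) f = f;
  comp_id_r : forall X Y (f : Hom X Y), comp f (cid X) = f;
  comp_assoc : forall X Y Z W (f : Hom X Y) (g : Hom Y Z) (h : Hom Z W),
      comp h (comp g f) = comp (comp h g) f
}.
Arguments Hom {c} X Y.
Arguments cid {c} X.
Arguments comp {c X Y Z} g f.

Declare Scope cat_scope.
Delimit Scope cat_scope with cat.
Open Scope cat_scope.
Notation "g ∘ f" := (comp g f) (at level 40, left associativity) : cat_scope.

Record Monoidal (C : Category) := {
  tens : C -> C -> C;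
  tensm : forall X X' Y Y', Hom X Y -> Hom X' Y' -> Hom (tens X X') (tens Y Y');
  tens_id : forall X Y, tensm (cid X) (cid Y) = cid (tens X Y);
  tens_comp : forall X X' Y Y' Z Z' (f : Hom X Y) (g : Hom Y Z)
      (f' : Hom X' Y') (g' : Hom Y' Z'),
      tensm (g ∘ f) (g' ∘ f') = tensm g g' ∘ tensm f f';
  munit : C;
  assoc : forall X Y Z, Hom (tens (tens X Y) Z) (tens X (tens Y Z));
  assoc_inv : forall X Y Z, Hom (tens X (tens Y Z)) (tens (tens X Y) Z);
  assoc_iso1 : forall X Y Z, assoc_inv X Y Z ∘ assoc X Y Z = cid _;
  assoc_iso2 : forall X Y Z, assoc X Y Z ∘ assoc_inv X Y Z = cid _;
  assoc_nat : forall X X' Y Y' Z Z' (f : Hom X X') (g : Hom Y Y') (h : Hom Z Z'),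
      assoc X' Y' Z' ∘ tensm (tensm f g) h
      = tensm f (tensm g h) ∘ assoc X Y Z;
  lunit : forall X, Hom (tens munit X) X;
  lunit_inv : forall X, Hom X (tens munit X);
  lunit_iso1 : forall X, lunit_inv X ∘ lunit X = cid _;
  lunit_iso2 : forall X, lunit X ∘ lunit_inv X = cid _;
  lunit_nat : forall X Y (f : Hom X Y),
      lunit Y ∘ tensm (cid munit) f = f ∘ lunit X;
  runit : forall X, Hom (tens X munit) X;
  runit_inv : forall X, Hom X (tens X munit);
  runit_iso1 : forall X, runit_inv X ∘ runit X = cid _;
  runit_iso2 : forall X, runit X ∘ runit_inv X = cid _;
  runit_nat : forall X Y (f : Hom X Y),
      runit Y ∘ tensm f (cid munit) = f ∘ runit X;
  pentagon : forall X Y Z W,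
      assoc X Y (tens Z W) ∘ assoc (tens X Y) Z W
      = tensm (cid X) (assoc Y Z W) ∘ assoc X (tens Y Z) W
        ∘ tensm (assoc X Y Z) (cid W);
  triangle : forall X Y,
      tensm (cid X) (lunit Y) ∘ assoc X munit Y
      = tensm (runit X) (cid Y)
}.
Arguments tens {C} m X Y.
Arguments tensm {C} m {X X' Y Y'} f g.
Arguments munit {C} m.
Arguments assoc {C} m X Y Z.
Arguments lunit {C} m X.
Arguments runit {C} m X.

Record EndoFunctor (C : Category) := {
  fo : C -> C;
  fm : forall X Y, Hom X Y -> Hom (fo X) (fo Y);
  fm_id : forall X, fm (cid X) = cid (fo X);
  fm_comp : forall X Y Z (f : Hom X Y) (g : Hom Y Z),
      fm (g ∘ f) = fm g ∘ fm f
}.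
Arguments fo {C} e X.
Arguments fm {C} e {X Y} f.

Record Monad (C : Category) := {
  mT : EndoFunctor C;
  mu : forall X, Hom (fo mT (fo mT X)) (fo mT X);
  eta : forall X, Hom X (fo mT X);
  mu_nat : forall X Y (f : Hom X Y),
      fm mT f ∘ mu X = mu Y ∘ fm mT (fm mT f);
  eta_nat : forall X Y (f : Hom X Y), fm mT f ∘ eta X = eta Y ∘ f;
  mu_assoc : forall X, mu X ∘ fm mT (mu X) = mu X ∘ mu (fo mT X);
  mu_eta_l : forall X, mu X ∘ eta (fo mT X) = cid _;
  mu_eta_r : forall X, mu X ∘ fm mT (eta X) = cid _
}.
Arguments mT {C} m.
Arguments mu {C} m X.
Arguments eta {C} m X.

Record MonoidalMonad (C : Category) (M : Monoidal C) := {
  mmon : Monad C;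
  phi : forall X Y, Hom (tens M (fo (mT mmon) X) (fo (mT mmon) Y))
                        (fo (mT mmon) (tens M X Y));
  phi0 : Hom (munit M) (fo (mT mmon) (munit M));
  phi_nat : forall X X' Y Y' (f : Hom X X') (g : Hom Y Y'),
      fm (mT mmon) (tensm M f g) ∘ phi X Y
      = phi X' Y' ∘ tensm M (fm (mT mmon) f) (fm (mT mmon) g);
  phi_assoc : forall X Y Z,
      fm (mT mmon) (assoc M X Y Z) ∘ phi (tens M X Y) Z
         ∘ tensm M (phi X Y) (cid _)
      = phi X (tens M Y Z) ∘ tensm M (cid _) (phi Y Z)
         ∘ assoc M (fo (mT mmon) X) (fo (mT mmon) Y) (fo (mT mmon) Z);
  phi_lunit : forall X,
      fm (mT mmon) (lunit M X) ∘ phi (munit M) X ∘ tensm M phi0 (cid _)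
      = lunit M (fo (mT mmon) X);
  phi_runit : forall X,
      fm (mT mmon) (runit M X) ∘ phi X (munit M) ∘ tensm M (cid _) phi0
      = runit M (fo (mT mmon) X);
  eta_monoidal : forall X Y,
      phi X Y ∘ tensm M (eta mmon X) (eta mmon Y) = eta mmon (tens M X Y);
  eta_monoidal0 : eta mmon (munit M) = phi0;
  (* mu : TT => T is monoidal (TT with structure  T phi . phi_{T-,T-}, T phi0 . phi0) *)
  mu_monoidal : forall X Y,
      mu mmon (tens M X Y) ∘ fm (mT mmon) (phi X Y)
         ∘ phi (fo (mT mmon) X) (fo (mT mmon) Y)
      = phi X Y ∘ tensm M (mu mmon X) (mu mmon Y);
  mu_monoidal0 : mu mmon (munit M) ∘ fm (mT mmon) phi0 ∘ phi0 = phi0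
}.
Arguments mmon {C M} m.
Arguments phi {C M} m X Y.
Arguments phi0 {C M} m.

Section Kleisli.
Context {C : Category} {M : Monoidal C} (T : MonoidalMonad M).
Definition TT (X : C) : C := fo (mT (mmon T)) X.
Definition Tm {X Y : C} (f : Hom X Y) : Hom (TT X) (TT Y) := fm (mT (mmon T)) f.

Definition kcomp {X Y Z : C} (g : Hom Y (TT Z)) (f : Hom X (TT Y)) : Hom X (TT Z) :=
  mu (mmon T) Z ∘ Tm g ∘ f.
Definition kid (X : C) : Hom X (TT X) := eta (mmon T) X.
Definition ktens {X X' Y Y' : C} (f : Hom X (TT Y)) (f' : Hom X' (TT Y')) :
  Hom (tens M X X') (TT (tens M Y Y')) := phi T Y Y' ∘ tensm M f f'.
(* structure isomorphisms of A_T: images of those of A under the free functor *)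
Definition kassoc (X Y Z : C) : Hom (tens M (tens M X Y) Z) (TT (tens M X (tens M Y Z))) :=
  eta (mmon T) _ ∘ assoc M X Y Z.
Definition klunit (X : C) : Hom (tens M (munit M) X) (TT X) := eta (mmon T) _ ∘ lunit M X.
Definition krunit (X : C) : Hom (tens M X (munit M)) (TT X) := eta (mmon T) _ ∘ runit M X.
End Kleisli.
Arguments TT {C M} T X.
Arguments Tm {C M} T {X Y} f.
Arguments kcomp {C M} T {X Y Z} g f.
Arguments kid {C M} T X.
Arguments ktens {C M} T {X X' Y Y'} f f'.
Arguments kassoc {C M} T X Y Z.
Arguments klunit {C M} T X.
Arguments krunit {C M} T X.

Record MixedOpwreath (C : Category) (M : Monoidal C) (T : MonoidalMonad M) := {
  wG : EndoFunctor C;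
  zeta : forall X, Hom (fo wG (TT T X)) (TT T (fo wG X));
  delta : forall X, Hom (fo wG X) (TT T (fo wG (fo wG X)));
  eps : forall X, Hom (fo wG X) (TT T X);
  zeta_nat : forall X Y (f : Hom X Y),
      Tm T (fm wG f) ∘ zeta X = zeta Y ∘ fm wG (Tm T f);
  delta_nat : forall X Y (f : Hom X Y),
      Tm T (fm wG (fm wG f)) ∘ delta X = delta Y ∘ fm wG f;
  eps_nat : forall X Y (f : Hom X Y), Tm T f ∘ eps X = eps Y ∘ fm wG f;
  ow1 : forall X, zeta X ∘ fm wG (mu (mmon T) X)
        = mu (mmon T) (fo wG X) ∘ Tm T (zeta X) ∘ zeta (TT T X);
  ow2 : forall X, zeta X ∘ fm wG (eta (mmon T) X) = eta (mmon T) (fo wG X);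
  ow3 : forall X, mu (mmon T) X ∘ eps (TT T X)
        = mu (mmon T) X ∘ Tm T (eps X) ∘ zeta X;
  ow4 : forall X,
      mu (mmon T) (fo wG (fo wG X)) ∘ Tm T (zeta (fo wG X)) ∘ Tm T (fm wG (zeta X))
         ∘ delta (TT T X)
      = mu (mmon T) (fo wG (fo wG X)) ∘ Tm T (delta X) ∘ zeta X;
  ow5 : forall X,
      mu (mmon T) (fo wG (fo wG (fo wG X))) ∘ Tm T (delta (fo wG X)) ∘ delta X
      = mu (mmon T) (fo wG (fo wG (fo wG X))) ∘ Tm T (zeta (fo wG (fo wG X)))
         ∘ Tm T (fm wG (delta X)) ∘ delta X;
  ow6 : forall X, mu (mmon T) (fo wG X) ∘ Tm T (eps (fo wG X)) ∘ delta X
        = eta (mmon T) (fo wG X);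
  ow7 : forall X, mu (mmon T) (fo wG X) ∘ Tm T (zeta X) ∘ Tm T (fm wG (eps X)) ∘ delta X
        = eta (mmon T) (fo wG X)
}.
Arguments wG {C M T} m.
Arguments zeta {C M T} m X.
Arguments delta {C M T} m X.
Arguments eps {C M T} m X.

(* The lifted functor Gbar on A_T: Gbar f = zeta_Y . G f. *)
Definition Gbar {C : Category} {M : Monoidal C} {T : MonoidalMonad M}
  (W : MixedOpwreath T) {X Y : C} (f : Hom X (TT T Y)) :
  Hom (fo (wG W) X) (TT T (fo (wG W) Y)) := zeta W Y ∘ fm (wG W) f.

(* Opmonoidal mixed opwreaths: Gbar is an opmonoidal comonad on the
   monoidal category A_T (all compositions are Kleisli compositions).  *)
Record OpmonoidalMixedOpwreath (C : Category) (M : Monoidal C)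
    (T : MonoidalMonad M) := {
  ow : MixedOpwreath T;
  psi : forall X Y, Hom (fo (wG ow) (tens M X Y))
                        (TT T (tens M (fo (wG ow) X) (fo (wG ow) Y)));
  psi0 : Hom (fo (wG ow) (munit M)) (TT T (munit M));
  psi_nat : forall X X' Y Y' (f : Hom X (TT T X')) (g : Hom Y (TT T Y')),
      kcomp T (ktens T (Gbar ow f) (Gbar ow g)) (psi X Y)
      = kcomp T (psi X' Y') (Gbar ow (ktens T f g));
  psi_coassoc : forall X Y Z,
      kcomp T (kassoc T (fo (wG ow) X) (fo (wG ow) Y) (fo (wG ow) Z))
        (kcomp T (ktens T (psi X Y) (kid T (fo (wG ow) Z))) (psi (tens M X Y) Z))
      = kcomp T (ktens T (kid T (fo (wG ow) X)) (psi Y Z))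
          (kcomp T (psi X (tens M Y Z)) (Gbar ow (kassoc T X Y Z)));
  psi_lcounit : forall X,
      kcomp T (klunit T (fo (wG ow) X))
        (kcomp T (ktens T psi0 (kid T (fo (wG ow) X))) (psi (munit M) X))
      = Gbar ow (klunit T X);
  psi_rcounit : forall X,
      kcomp T (krunit T (fo (wG ow) X))
        (kcomp T (ktens T (kid T (fo (wG ow) X)) psi0) (psi X (munit M)))
      = Gbar ow (krunit T X);
  delta_opmonoidal : forall X Y,
      kcomp T (kcomp T (psi (fo (wG ow) X) (fo (wG ow) Y)) (Gbar ow (psi X Y)))
        (delta ow (tens M X Y))
      = kcomp T (ktens T (delta ow X) (delta ow Y)) (psi X Y);
  delta_opmonoidal0 :
      kcomp T (kcomp T psi0 (Gbar ow psi0)) (delta ow (munit M)) = psi0;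
  eps_opmonoidal : forall X Y,
      kcomp T (ktens T (eps ow X) (eps ow Y)) (psi X Y) = eps ow (tens M X Y);
  eps_opmonoidal0 : kcomp T (kid T (munit M)) (eps ow (munit M)) = psi0
}.
Arguments ow {C M T} o.
Arguments psi {C M T} o X Y.
Arguments psi0 {C M T} o.

(* The category mkl(G, zeta, T): hom-sets A(GX, TY), identity eps_X,
   composite of f : GX -> TY and g : GY -> TZ given by the wreath
   convolution  mu3_Z . TTg . T zeta_Y . TGf . delta_X. *)
Definition mkl_id {C : Category} {M : Monoidal C} {T : MonoidalMonad M}
  (W : MixedOpwreath T) (X : C) : Hom (fo (wG W) X) (TT T X) := eps W X.

Definition mkl_comp {C : Category} {M : Monoidal C} {T : MonoidalMonad M}
  (W : MixedOpwreath T) {X Y Z : C}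
  (f : Hom (fo (wG W) X) (TT T Y)) (g : Hom (fo (wG W) Y) (TT T Z)) :
  Hom (fo (wG W) X) (TT T Z) :=
  mu (mmon T) Z ∘ Tm T (mu (mmon T) Z) ∘ Tm T (Tm T g) ∘ Tm T (zeta W Y)
    ∘ Tm T (fm (wG W) f) ∘ delta W X.
Arguments Gbar {C M T} W {X Y} f.
Arguments mkl_id {C M T} W X.
Arguments mkl_comp {C M T} W {X Y Z} f g.

From Stdlib Require Import Setoid.

(* mkl(G, zeta, T) is the co-Kleisli category of the comonad Gbar on the
   Kleisli category A_T: the wreath convolution of f and g is
   g ⋆ Gbar f ⋆ delta.  As Gbar is opmonoidal, maps of the form
   ktens g g' ⋆ psi satisfy the interchange law for this composition, and
   e := epsilon_I = psi0 is a unit for ktens.  Eckmann-Hilton: ktens f g ⋆ psi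
   is the composite of ktens f e ⋆ psi and ktens e g ⋆ psi in either order.
   Postcomposing with rho_I = lambda_I turns these two composites into
   (g after f) ⋆ Gbar rho_I and (f after g) ⋆ Gbar rho_I, and Gbar rho_I is
   invertible. *)

(* In a left-associated composite [x ∘ b_n ∘ ... ∘ b_1] the chain
   [b_n ∘ ... ∘ b_1] is not a subterm, so [E : b_n ∘ ... ∘ b_1 = c] is
   first whiskered by an arbitrary prefix [x]. *)
Ltac rewrite_chain E :=
  let E' := fresh in
  let H := fresh in
  pose proof E as E'; try unfold TT, Tm in E' |- *;
  lazymatch type of E' with
  | @eq (@Hom ?c ?X ?Y) ?l ?r =>
      assert (H : forall Z (x : @Hom c Y Z), x ∘ l = x ∘ r)
        by (intros; rewrite E'; reflexivity);
      repeat setoid_rewrite comp_assoc in H;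
      first [rewrite H | rewrite E']; clear H E'
  end;
  repeat rewrite comp_assoc.
Tactic Notation "rewrite_chain" "<-" constr(E) := rewrite_chain (eq_sym E).

Section Coherence.
Context {C : Category} (M : Monoidal C).
Local Notation "f ⊗ g" := (tensm M f g) (at level 35).
Local Notation I := (munit M).

Lemma tensm_comp_cid_l {A X Y Z : C} (f : Hom X Y) (g : Hom Y Z) :
  cid A ⊗ (g ∘ f) = (cid A ⊗ g) ∘ (cid A ⊗ f).
Proof. rewrite <- tens_comp, comp_id_l. reflexivity. Qed.

Lemma tensm_comp_cid_r {A X Y Z : C} (f : Hom X Y) (g : Hom Y Z) :
  (g ∘ f) ⊗ cid A = (g ⊗ cid A) ∘ (f ⊗ cid A).
Proof. rewrite <- tens_comp, comp_id_l. reflexivity. Qed.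

Lemma tensm_split_l {X X' Y Y' : C} (f : Hom X Y) (g : Hom X' Y') :
  f ⊗ g = (cid Y ⊗ g) ∘ (f ⊗ cid X').
Proof. rewrite <- tens_comp, comp_id_l, comp_id_r. reflexivity. Qed.

Lemma tensm_split_r {X X' Y Y' : C} (f : Hom X Y) (g : Hom X' Y') :
  f ⊗ g = (f ⊗ cid Y') ∘ (cid X ⊗ g).
Proof. rewrite <- tens_comp, comp_id_l, comp_id_r. reflexivity. Qed.

Lemma tensm_cid_munit_l_inj {X Y : C} (h k : Hom X Y) :
  cid I ⊗ h = cid I ⊗ k -> h = k.
Proof.
  intros E.
  assert (Hconj : forall h0 : Hom X Y, h0 = lunit M Y ∘ (cid I ⊗ h0) ∘ lunit_inv M X).
  { intros h0. rewrite lunit_nat, <- comp_assoc, lunit_iso2, comp_id_r. reflexivity. }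
  rewrite (Hconj h), (Hconj k), E. reflexivity.
Qed.

Lemma tensm_cid_munit_r_inj {X Y : C} (h k : Hom X Y) :
  h ⊗ cid I = k ⊗ cid I -> h = k.
Proof.
  intros E.
  assert (Hconj : forall h0 : Hom X Y, h0 = runit M Y ∘ (h0 ⊗ cid I) ∘ runit_inv M X).
  { intros h0. rewrite runit_nat, <- comp_assoc, runit_iso2, comp_id_r. reflexivity. }
  rewrite (Hconj h), (Hconj k), E. reflexivity.
Qed.

Lemma lunit_tens_assoc (X Y : C) :
  lunit M (tens M X Y) ∘ assoc M I X Y = lunit M X ⊗ cid Y.
Proof.
  apply tensm_cid_munit_l_inj.
  (* both sides agree after precomposing with the invertible map [P],
     by the pentagon and triangle axioms *)
  set (P := assoc M I (tens M I X) Y ∘ (assoc M I I X ⊗ cid Y)).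
  set (Pinv := (assoc_inv M I I X ⊗ cid Y) ∘ assoc_inv M I (tens M I X) Y).
  assert (HP : P ∘ Pinv = cid _).
  { unfold P, Pinv. rewrite !comp_assoc.
    rewrite_chain <- (tens_comp M (assoc_inv M I I X) (assoc M I I X) (cid Y) (cid Y)).
    rewrite assoc_iso2, comp_id_l, tens_id, comp_id_r, assoc_iso2. reflexivity. }
  assert (E : (cid I ⊗ (lunit M (tens M X Y) ∘ assoc M I X Y)) ∘ P
              = (cid I ⊗ (lunit M X ⊗ cid Y)) ∘ P).
  { unfold P. rewrite tensm_comp_cid_l, !comp_assoc.
    rewrite_chain <- (pentagon M I I X Y).
    rewrite_chain (triangle M I (tens M X Y)).
    rewrite <- (tens_id M X Y).
    rewrite_chain <- (assoc_nat M (runit M I) (cid X) (cid Y)).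
    rewrite <- (triangle M I X), tensm_comp_cid_r, !comp_assoc.
    rewrite_chain (assoc_nat M (cid I) (lunit M X) (cid Y)). reflexivity. }
  rewrite <- (comp_id_r (cid I ⊗ (lunit M X ⊗ cid Y))).
  rewrite <- HP, comp_assoc, <- E, <- comp_assoc, HP, comp_id_r. reflexivity.
Qed.

Lemma lunit_munit_tens (X : C) : lunit M (tens M I X) = cid I ⊗ lunit M X.
Proof.
  pose proof (f_equal (comp (lunit_inv M X)) (lunit_nat M (lunit M X))) as E.
  rewrite !comp_assoc, lunit_iso1, !comp_id_l in E. symmetry. exact E.
Qed.

Lemma lunit_munit : lunit M I = runit M I.
Proof.
  apply tensm_cid_munit_r_inj.
  rewrite <- lunit_tens_assoc, <- triangle, lunit_munit_tens. reflexivity.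
Qed.
End Coherence.

Section KleisliCategory.
Context {C : Category} {M : Monoidal C} {T : MonoidalMonad M}.
Local Notation I := (munit M).

Lemma kcomp_assoc {X Y Z V : C} (f : Hom X (TT T Y)) (g : Hom Y (TT T Z))
  (h : Hom Z (TT T V)) :
  kcomp T h (kcomp T g f) = kcomp T (kcomp T h g) f.
Proof.
  unfold kcomp, Tm, TT. rewrite !fm_comp, !comp_assoc.
  rewrite_chain (mu_nat (mmon T) h).
  rewrite_chain (mu_assoc (mmon T) V). reflexivity.
Qed.

Lemma kcomp_kid_l {X Y : C} (f : Hom X (TT T Y)) : kcomp T (kid T Y) f = f.
Proof. unfold kcomp, kid, Tm, TT. rewrite mu_eta_r, comp_id_l. reflexivity. Qed.

Lemma kcomp_kid_r {X Y : C} (f : Hom X (TT T Y)) : kcomp T f (kid T X) = f.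
Proof.
  unfold kcomp, kid, Tm, TT.
  rewrite_chain (eta_nat (mmon T) f). rewrite mu_eta_l, comp_id_l. reflexivity.
Qed.

Definition Kleisli : Category := {|
  Ob := C;
  Hom := fun X Y => Hom X (TT T Y);
  cid := kid T;
  comp := fun X Y Z g f => kcomp T g f;
  comp_id_l := @kcomp_kid_l;
  comp_id_r := @kcomp_kid_r;
  comp_assoc := @kcomp_assoc |}.

Local Notation "g ⋆ f" := (@comp Kleisli _ _ _ g f) (at level 40, left associativity).
Local Notation KHom X Y := (@Hom Kleisli X Y).

Definition kfree {X Y : C} (h : Hom X Y) : KHom X Y := eta (mmon T) Y ∘ h.

Lemma kfree_comp {X Y Z : C} (h : Hom X Y) (k : Hom Y Z) :
  kfree k ⋆ kfree h = kfree (k ∘ h).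
Proof.
  unfold kfree; simpl; unfold kcomp, Tm, TT. rewrite fm_comp, !comp_assoc.
  rewrite_chain (mu_eta_r (mmon T) Z). rewrite_chain (eta_nat (mmon T) k).
  rewrite comp_id_l. reflexivity.
Qed.

Lemma kfree_cid (X : C) : kfree (cid X) = @cid Kleisli X.
Proof. exact (comp_id_r (eta (mmon T) X)). Qed.

Lemma kcomp_kfree_cancel_r {X Y Z : C} (h : Hom X Y) (h' : Hom Y X)
  (x y : KHom Y Z) :
  h ∘ h' = cid Y -> x ⋆ kfree h = y ⋆ kfree h -> x = y.
Proof.
  intros Hsec E.
  rewrite <- (comp_id_r (c:=Kleisli) x), <- (comp_id_r (c:=Kleisli) y).
  rewrite <- kfree_cid, <- Hsec, <- kfree_comp, !comp_assoc, E. reflexivity.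
Qed.

Lemma ktens_kcomp {X X' Y Y' Z Z' : C} (f : KHom X Y) (g : KHom Y Z)
  (f' : KHom X' Y') (g' : KHom Y' Z') :
  ktens T (g ⋆ f) (g' ⋆ f') = ktens T g g' ⋆ ktens T f f'.
Proof.
  simpl. unfold ktens, kcomp, Tm, TT. rewrite !tens_comp, !fm_comp, !comp_assoc.
  rewrite_chain (phi_nat T g g'). rewrite_chain (mu_monoidal T Z Z'). reflexivity.
Qed.

Lemma ktens_split_l {X X' Y Y' : C} (f : KHom X Y) (g : KHom X' Y') :
  ktens T f g = ktens T (kid T Y) g ⋆ ktens T f (kid T X').
Proof.
  rewrite <- ktens_kcomp.
  change (kid T Y) with (@cid Kleisli Y); change (kid T X') with (@cid Kleisli X').
  rewrite comp_id_l, comp_id_r. reflexivity.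
Qed.

Lemma ktens_split_r {X X' Y Y' : C} (f : KHom X Y) (g : KHom X' Y') :
  ktens T f g = ktens T f (kid T Y') ⋆ ktens T (kid T X) g.
Proof.
  rewrite <- ktens_kcomp.
  change (kid T Y') with (@cid Kleisli Y'); change (kid T X) with (@cid Kleisli X).
  rewrite comp_id_l, comp_id_r. reflexivity.
Qed.

Lemma klunit_nat {X Y : C} (f : KHom X Y) :
  klunit T Y ⋆ ktens T (kid T I) f = f ⋆ klunit T X.
Proof.
  simpl. unfold klunit, ktens, kcomp, kid, Tm, TT. rewrite !fm_comp, !comp_assoc.
  rewrite mu_eta_r, comp_id_l, (tensm_split_r M (eta (mmon T) I)), !comp_assoc.
  rewrite eta_monoidal0.
  rewrite_chain (phi_lunit T Y). rewrite_chain (lunit_nat M f).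
  rewrite_chain (eta_nat (mmon T) f). rewrite mu_eta_l, comp_id_l. reflexivity.
Qed.

Lemma krunit_nat {X Y : C} (f : KHom X Y) :
  krunit T Y ⋆ ktens T f (kid T I) = f ⋆ krunit T X.
Proof.
  simpl. unfold krunit, ktens, kcomp, kid, Tm, TT. rewrite !fm_comp, !comp_assoc.
  rewrite mu_eta_r, comp_id_l, (tensm_split_l M _ (eta (mmon T) I)), !comp_assoc.
  rewrite eta_monoidal0.
  rewrite_chain (phi_runit T Y). rewrite_chain (runit_nat M f).
  rewrite_chain (eta_nat (mmon T) f). rewrite mu_eta_l, comp_id_l. reflexivity.
Qed.

Lemma klunit_munit : klunit T I = krunit T I.
Proof. unfold klunit, krunit. rewrite lunit_munit. reflexivity. Qed.

Section LiftedComonad.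
Context {W : MixedOpwreath T}.
Local Notation G := (wG W).

Lemma Gbar_kcomp {X Y Z : C} (f : KHom X Y) (g : KHom Y Z) :
  Gbar W (g ⋆ f) = Gbar W g ⋆ Gbar W f.
Proof.
  simpl. unfold Gbar, kcomp, Tm, TT. rewrite !fm_comp, !comp_assoc.
  rewrite_chain (ow1 W Z). rewrite_chain <- (zeta_nat W g). reflexivity.
Qed.

Lemma Gbar_kfree {X Y : C} (h : Hom X Y) : Gbar W (kfree h) = kfree (fm G h).
Proof.
  unfold Gbar, kfree. rewrite fm_comp, comp_assoc.
  rewrite_chain (ow2 W Y). reflexivity.
Qed.

Lemma eps_natural {X Y : C} (f : KHom X Y) : eps W Y ⋆ Gbar W f = f ⋆ eps W X.
Proof.
  simpl. unfold Gbar, kcomp, Tm, TT. rewrite !comp_assoc.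
  rewrite_chain <- (ow3 W Y). rewrite_chain <- (eps_nat W f). reflexivity.
Qed.

Lemma delta_natural {X Y : C} (f : KHom X Y) :
  delta W Y ⋆ Gbar W f = Gbar W (Gbar W f) ⋆ delta W X.
Proof.
  simpl. unfold Gbar, kcomp, Tm, TT. rewrite !fm_comp, !comp_assoc.
  rewrite_chain <- (ow4 W Y). rewrite_chain <- (delta_nat W f). reflexivity.
Qed.

Lemma eps_delta (X : C) : eps W (fo G X) ⋆ delta W X = @cid Kleisli _.
Proof. exact (ow6 W X). Qed.

Lemma Gbar_eps_delta (X : C) : Gbar W (eps W X) ⋆ delta W X = @cid Kleisli _.
Proof.
  simpl. unfold Gbar, kcomp, Tm. rewrite fm_comp, !comp_assoc. apply ow7.
Qed.

Lemma mkl_compE {X Y Z : C} (f : Hom (fo G X) (TT T Y)) (g : Hom (fo G Y) (TT T Z)) :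
  mkl_comp W f g = g ⋆ Gbar W f ⋆ delta W X.
Proof.
  simpl. unfold mkl_comp, Gbar, kcomp, Tm, TT. rewrite !fm_comp, !comp_assoc.
  reflexivity.
Qed.

Lemma mkl_comp_eps_l {X Y : C} (g : Hom (fo G X) (TT T Y)) :
  mkl_comp W (eps W X) g = g.
Proof.
  rewrite mkl_compE, <- comp_assoc, Gbar_eps_delta. exact (comp_id_r (c:=Kleisli) g).
Qed.

Lemma mkl_comp_eps_r {X Y : C} (f : Hom (fo G X) (TT T Y)) :
  mkl_comp W f (eps W Y) = f.
Proof.
  rewrite mkl_compE, eps_natural, <- comp_assoc, eps_delta.
  exact (comp_id_r (c:=Kleisli) f).
Qed.

Lemma mkl_comp_intertwine {X0 X1 X2 Y0 Y1 Y2 : C}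
  {k0 : KHom X0 Y0} {k1 : KHom X1 Y1} {k2 : KHom X2 Y2}
  {a : KHom (fo G X0) X1} {b : KHom (fo G X1) X2}
  {f : KHom (fo G Y0) Y1} {g : KHom (fo G Y1) Y2} :
  k1 ⋆ a = f ⋆ Gbar W k0 -> k2 ⋆ b = g ⋆ Gbar W k1 ->
  k2 ⋆ mkl_comp W a b = mkl_comp W f g ⋆ Gbar W k0.
Proof.
  intros Ha Hb.
  rewrite !mkl_compE, !comp_assoc, Hb, <- (comp_assoc (c:=Kleisli) (Gbar W a)).
  rewrite <- Gbar_kcomp, Ha, Gbar_kcomp, <- !comp_assoc, delta_natural.
  reflexivity.
Qed.

Lemma kcomp_Gbar_kfree_cancel_r {X Y Z : C} (h : Hom X Y) (h' : Hom Y X)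
  (x y : KHom (fo G Y) Z) :
  h ∘ h' = cid Y -> x ⋆ Gbar W (kfree h) = y ⋆ Gbar W (kfree h) -> x = y.
Proof.
  intros Hsec. rewrite Gbar_kfree.
  apply (kcomp_kfree_cancel_r _ (fm G h')).
  rewrite <- fm_comp, Hsec. apply fm_id.
Qed.
End LiftedComonad.

Section OpmonoidalLift.
Context {W : OpmonoidalMixedOpwreath T}.
Local Notation G := (wG (ow W)).

Lemma eps_munit : eps (ow W) I = psi0 W.
Proof.
  rewrite <- (eps_opmonoidal0 W). symmetry. exact (comp_id_l (c:=Kleisli) _).
Qed.

Lemma mkl_comp_interchange {X X' Y Y' Z Z' : C}
  (f : KHom (fo G X) Y) (f' : KHom (fo G X') Y')
  (g : KHom (fo G Y) Z) (g' : KHom (fo G Y') Z') :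
  mkl_comp (ow W) (ktens T f f' ⋆ psi W X X') (ktens T g g' ⋆ psi W Y Y')
  = ktens T (mkl_comp (ow W) f g) (mkl_comp (ow W) f' g') ⋆ psi W X X'.
Proof.
  assert (Hpsi : psi W Y Y' ⋆ Gbar (ow W) (ktens T f f')
                 = ktens T (Gbar (ow W) f) (Gbar (ow W) f') ⋆ psi W (fo G X) (fo G X'))
    by (symmetry; exact (psi_nat W f f')).
  assert (Hdelta : psi W (fo G X) (fo G X') ⋆ Gbar (ow W) (psi W X X') ⋆ delta (ow W) _
                   = ktens T (delta (ow W) X) (delta (ow W) X') ⋆ psi W X X')
    by exact (delta_opmonoidal W X X').
  rewrite !mkl_compE, Gbar_kcomp, !comp_assoc.
  rewrite_chain Hpsi. rewrite_chain Hdelta.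
  rewrite !ktens_kcomp. reflexivity.
Qed.

Lemma psi_lcounit_nat {X Y : C} (g : KHom (fo G X) Y) :
  klunit T Y ⋆ ktens T (psi0 W) g ⋆ psi W I X = g ⋆ Gbar (ow W) (klunit T X).
Proof.
  assert (Hcounit : klunit T (fo G X) ⋆ (ktens T (psi0 W) (kid T _) ⋆ psi W I X)
                    = Gbar (ow W) (klunit T X))
    by exact (psi_lcounit W X).
  rewrite ktens_split_l, !comp_assoc, klunit_nat, <- Hcounit, !comp_assoc.
  reflexivity.
Qed.

Lemma psi_rcounit_nat {X Y : C} (f : KHom (fo G X) Y) :
  krunit T Y ⋆ ktens T f (psi0 W) ⋆ psi W X I = f ⋆ Gbar (ow W) (krunit T X).
Proof.
  assert (Hcounit : krunit T (fo G X) ⋆ (ktens T (kid T _) (psi0 W) ⋆ psi W X I)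
                    = Gbar (ow W) (krunit T X))
    by exact (psi_rcounit W X).
  rewrite ktens_split_r, !comp_assoc, krunit_nat, <- Hcounit, !comp_assoc.
  reflexivity.
Qed.
End OpmonoidalLift.
End KleisliCategory.
Arguments Kleisli {C M} T.
Arguments kfree {C M} T {X Y} h.

Notation "g ⋆ f" := (@comp (Kleisli _) _ _ _ g f) (at level 40, left associativity).

Theorem corollary5p2 (C : Category) (M : Monoidal C) (T : MonoidalMonad M)
  (W : OpmonoidalMixedOpwreath T)
  (f g : Hom (fo (wG (ow W)) (munit M)) (TT T (munit M))) :
  mkl_comp (ow W) f g = mkl_comp (ow W) g f.
Proof.
  set (e := eps (ow W) (munit M)).
  assert (Hl : forall h : Hom (fo (wG (ow W)) (munit M)) (TT T (munit M)),
            krunit T _ ⋆ (ktens T e h ⋆ psi W _ _) = h ⋆ Gbar (ow W) (krunit T _)).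
  { intros h. unfold e. rewrite <- klunit_munit, eps_munit, comp_assoc.
    apply psi_lcounit_nat. }
  assert (Hr : forall h : Hom (fo (wG (ow W)) (munit M)) (TT T (munit M)),
            krunit T _ ⋆ (ktens T h e ⋆ psi W _ _) = h ⋆ Gbar (ow W) (krunit T _)).
  { intros h. unfold e. rewrite eps_munit, comp_assoc. apply psi_rcounit_nat. }
  (* both sides equal [ktens T f g ⋆ psi W _ _] *)
  assert (Hswap : mkl_comp (ow W) (ktens T f e ⋆ psi W _ _) (ktens T e g ⋆ psi W _ _)
                  = mkl_comp (ow W) (ktens T e g ⋆ psi W _ _) (ktens T f e ⋆ psi W _ _)).
  { unfold e. rewrite !mkl_comp_interchange, !mkl_comp_eps_l, !mkl_comp_eps_r.
    reflexivity. }
  apply (kcomp_Gbar_kfree_cancel_r _ _ _ _ (runit_iso2 M (munit M))).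
  change (kfree T (runit M (munit M))) with (krunit T (munit M)).
  rewrite <- (mkl_comp_intertwine (Hr f) (Hl g)), <- (mkl_comp_intertwine (Hl g) (Hr f)).
  rewrite Hswap. reflexivity.
Qed.
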